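(* Let $\alpha_f>0$ and $\mathcal{R}_f>0$ be arbitrary constants, and define functions on $[0,\infty)$ by $$\psi(r) := e^{-\alpha_f \min\{r^2,\mathcal{R}_f^2\}},\qquad \Psi(r):=\int_0^r\psi(s)\,ds,\qquad g(r):=1-\frac12\,\frac{\int_0^{\min\{r,\mathcal{R}_f\}}\frac{\Psi(s)}{\psi(s)}\,ds}{\int_0^{\mathcal{R}_f}\frac{\Psi(s)}{\psi(s)}\,ds},\qquad f(r):=\int_0^r\psi(s)g(s)\,ds.$$ Then: (F1) $f(0)=0$ and $f'(0)=1$. (F2) For all $r\ge 0$, $\frac12 e^{-\alpha_f\mathcal{R}_f^2}\le \frac12\psi(r)\le f'(r)\le 1$. (F3) For all $r\ge0$, $\frac12 e^{-\alpha_f\mathcal{R}_f^2}\, r\le \frac12\Psi(r)\le f(r)\le \Psi(r)\le r$. (F4) For all $0\le r\le \mathcal{R}_f$, $f''(r)+\alpha_f\, r f'(r)\le -\frac{e^{-\alpha_f\mathcal{R}_f^2}}{\mathcal{R}_f^2}\, f(r)$. (F5) For all $r\ge0$, $f''(r)\le 0$, and $f''(r)=0$ when $r>\mathcal{R}_f$. (F6) If $\alpha_f\mathcal{R}_f^2\ge \ln 2$, then for any $0<c<1$ and $r\ge 0$, $f(r)\le e^{-\frac{c\, e^{-\alpha_f\mathcal{R}_f^2}}{4}}\, f((1+c)r)$. *)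

From Stdlib Require Import Reals Lra.
From Coquelicot Require Import Coquelicot.
Open Scope R_scope.

Definition psi (alpha Rf : R) (r : R) : R := exp (- alpha * Rmin (r ^ 2) (Rf ^ 2)).

Definition Psi (alpha Rf : R) (r : R) : R := RInt (psi alpha Rf) 0 r.

Definition gfun (alpha Rf : R) (r : R) : R :=
  1 - / 2 * (RInt (fun s => Psi alpha Rf s / psi alpha Rf s) 0 (Rmin r Rf)
             / RInt (fun s => Psi alpha Rf s / psi alpha Rf s) 0 Rf).

Definition ffun (alpha Rf : R) (r : R) : R :=
  RInt (fun s => psi alpha Rf s * gfun alpha Rf s) 0 r.

(* For an interior point of D this is the usual two-sided derivative; at an
   endpoint of an interval D it is the corresponding one-sided derivative. *)
Definition has_deriv_in (D : R -> Prop) (F : R -> R) (x l : R) : Prop :=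
  filterlim (fun y => (F y - F x) / (y - x))
    (within (fun y => D y /\ y <> x) (locally x)) (locally l).

Definition nonneg_dom (r : R) : Prop := 0 <= r.

From Stdlib Require Import Reals Lra.
From Coquelicot Require Import Coquelicot.
Open Scope R_scope.

(* On [0, Rf] one has psi r = exp (- alpha r^2), so psi' = - 2 alpha r psi, and with
   I = int_0^Rf Psi/psi the derivative of g is - Psi / (2 psi I); hence
   f'' = - 2 alpha r f' - Psi / (2 I) there, while beyond Rf both psi and g are constant.
   Everything then follows from the elementary bounds e <= psi <= 1, 1/2 <= g <= 1,
   e r <= Psi r <= r and e Rf^2 / 2 <= I <= Rf^2 / (2 e), where e = exp (- alpha Rf^2):
   (F4) from f <= Psi and 2 e I <= Rf^2, (F5) because each term of f'' is nonpositive.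
   For (F6), f ((1 + c) r) >= f r + c r e / 2, f r <= r and exp (- x) >= 1 - x suffice.  The derivatives fp and fpp of the
   statement are pinned down because derivatives along a set are unique at its limit points. *)

Section IntegralOfContinuous.

Variable f : R -> R.
Hypothesis f_cont : forall x, continuous f x.

Lemma ex_RInt_of_continuous u v : ex_RInt f u v.
Proof. apply (@ex_RInt_continuous R_CompleteNormedModule); intros; apply f_cont. Qed.

Lemma is_derive_RInt_of_continuous u x : is_derive (fun y => RInt f u y) x (f x).
Proof.
apply (is_derive_RInt f _ u).
- apply filter_forall; intros; apply (@RInt_correct R_CompleteNormedModule), ex_RInt_of_continuous.
- apply f_cont.
Qed.

Lemma continuous_RInt_of_continuous u x : continuous (fun y => RInt f u y) x.
Proof.
apply (@ex_derive_continuous R_AbsRing R_NormedModule).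
eexists; apply is_derive_RInt_of_continuous.
Qed.

End IntegralOfContinuous.

Lemma RInt_ge_const f u v m : u <= v -> ex_RInt f u v ->
  (forall x, u < x < v -> m <= f x) -> (v - u) * m <= RInt f u v.
Proof.
intros Huv Hf Hm. rewrite <- (RInt_const (V := R_CompleteNormedModule)).
apply RInt_le; auto. apply ex_RInt_const.
Qed.

Lemma RInt_le_const f u v m : u <= v -> ex_RInt f u v ->
  (forall x, u < x < v -> f x <= m) -> RInt f u v <= (v - u) * m.
Proof.
intros Huv Hf Hm. rewrite <- (RInt_const (V := R_CompleteNormedModule)).
apply RInt_le; auto. apply ex_RInt_const.
Qed.

Lemma is_RInt_linear c v : is_RInt (fun s => c * s) 0 v (c * v ^ 2 / 2).
Proof.
replace (c * v ^ 2 / 2) with (minus (c * v ^ 2 / 2) (c * 0 ^ 2 / 2))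
  by (unfold minus, plus, opp; simpl; field).
apply (is_RInt_derive (fun s => c * s ^ 2 / 2)).
- intros; auto_derive; [auto | field].
- intros; apply (@ex_derive_continuous R_AbsRing R_NormedModule); auto_derive; auto.
Qed.

Definition limit_point (D : R -> Prop) (x : R) : Prop :=
  forall d, 0 < d -> exists y, D y /\ y <> x /\ Rabs (y - x) < d.

Lemma limit_point_nonneg_dom x : 0 <= x -> limit_point nonneg_dom x.
Proof.
intros Hx d Hd. exists (x + d / 2). unfold nonneg_dom.
rewrite Rabs_right; lra.
Qed.

Lemma limit_point_segment u v x : u < v -> u <= x <= v -> limit_point (fun y => u <= y <= v) x.
Proof.
intros Huv Hx d Hd. pose proof (Rmin_l d (v - u)). pose proof (Rmin_r d (v - u)).
assert (0 < Rmin d (v - u)) by (apply Rmin_glb_lt; lra).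
destruct (Rle_or_lt x ((u + v) / 2)).
- exists (x + Rmin d (v - u) / 2). rewrite Rabs_right; lra.
- exists (x - Rmin d (v - u) / 2). rewrite Rabs_left; lra.
Qed.

Lemma is_derive_has_deriv_in D F x l : is_derive F x l -> has_deriv_in D F x l.
Proof.
intros H%is_derive_Reals P [eps HP].
destruct (H eps (cond_pos eps)) as [d Hd].
exists d. intros y Hy [_ Hne]. apply HP.
assert (Hy' : x + (y - x) = y) by (simpl; ring).
specialize (Hd (y - x)). rewrite Hy' in Hd.
apply Hd; [lra | exact Hy].
Qed.

Lemma has_deriv_in_ext D F G x l : (forall y, D y -> F y = G y) -> D x ->
  has_deriv_in D G x l -> has_deriv_in D F x l.
Proof.
intros HFG Hx HG. revert HG. apply filterlim_within_ext.
intros y [Hy _]. simpl. rewrite (HFG y Hy), (HFG x Hx). reflexivity.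
Qed.

Lemma has_deriv_in_unique D F x l1 l2 : limit_point D x ->
  has_deriv_in D F x l1 -> has_deriv_in D F x l2 -> l1 = l2.
Proof.
intros Hx. apply (@filterlim_locally_unique _ R_AbsRing R_NormedModule).
constructor.
- intros [d Hd]. destruct (Hx d (cond_pos d)) as [y [HDy [Hne Hy]]]. exact (Hd y Hy (conj HDy Hne)).
- apply within_filter, locally_filter.
Qed.

Lemma continuous_Rmin (f g : R -> R) x :
  continuous f x -> continuous g x -> continuous (fun y => Rmin (f y) (g y)) x.
Proof.
intros Hf%continuity_pt_filterlim Hg%continuity_pt_filterlim.
apply continuity_pt_filterlim, continuity_pt_ext with (fun y => (f y + g y - Rabs (f y - g y)) / 2).
{ intros y. unfold Rmin.
  destruct (Rle_dec (f y) (g y)); [rewrite Rabs_left1 | rewrite Rabs_right]; lra. }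
apply continuity_pt_mult; [| apply continuity_pt_const; intros ? ?; reflexivity].
apply continuity_pt_minus; [now apply continuity_pt_plus |].
apply (continuity_pt_comp (fun y => f y - g y) Rabs);
  [now apply continuity_pt_minus | apply Rcontinuity_abs].
Qed.

Lemma exp_le_exp x y : x <= y -> exp x <= exp y.
Proof. intros [Hxy | ->]; [left; apply exp_increasing |]; lra. Qed.

Section Profile.

Variables a b : R.
Hypothesis Ha : 0 <= a.
Hypothesis Hb : 0 < b.

Local Notation e := (exp (- a * b ^ 2)).

Lemma psi_continuous x : continuous (psi a b) x.
Proof.
apply continuous_exp_comp, (continuous_mult (fun _ => - a)); [apply continuous_const |].
apply continuous_Rmin; [| apply continuous_const].
apply (@ex_derive_continuous R_AbsRing R_NormedModule); auto_derive; auto.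
Qed.

Lemma psi_pos x : 0 < psi a b x.
Proof. apply exp_pos. Qed.

Lemma psi_le_1 x : psi a b x <= 1.
Proof.
rewrite <- exp_0. apply exp_le_exp.
assert (0 <= Rmin (x ^ 2) (b ^ 2)) by (apply Rmin_glb; apply pow2_ge_0). nra.
Qed.

Lemma psi_ge x : e <= psi a b x.
Proof. apply exp_le_exp. assert (Rmin (x ^ 2) (b ^ 2) <= b ^ 2) by apply Rmin_r. nra. Qed.

Lemma psi_inside x : 0 <= x <= b -> psi a b x = exp (- a * x ^ 2).
Proof. intros Hx. unfold psi. rewrite Rmin_left; [reflexivity | nra]. Qed.

Lemma psi_outside x : b < x -> psi a b x = e.
Proof. intros Hx. unfold psi. rewrite Rmin_right; [reflexivity | nra]. Qed.

Lemma ex_RInt_psi u v : ex_RInt (psi a b) u v.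
Proof. apply ex_RInt_of_continuous, psi_continuous. Qed.

Lemma Psi_ge r : 0 <= r -> e * r <= Psi a b r.
Proof.
intros Hr. replace (e * r) with ((r - 0) * e) by ring.
apply RInt_ge_const; auto using ex_RInt_psi.
intros; apply psi_ge.
Qed.

Lemma Psi_le r : 0 <= r -> Psi a b r <= r.
Proof.
intros Hr. replace r with ((r - 0) * 1) at 2 by ring.
apply RInt_le_const; auto using ex_RInt_psi.
intros; apply psi_le_1.
Qed.

Lemma Psi_nonneg r : 0 <= r -> 0 <= Psi a b r.
Proof. intros Hr. pose proof (Psi_ge r Hr). pose proof (exp_pos (- a * b ^ 2)). nra. Qed.

Definition Psi_div_psi s := Psi a b s / psi a b s.

Definition int_Psi_div_psi x := RInt Psi_div_psi 0 x.

Local Notation I := int_Psi_div_psi.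

Lemma Psi_div_psi_continuous x : continuous Psi_div_psi x.
Proof.
apply (continuous_mult (Psi a b) (fun s => / psi a b s)).
- apply continuous_RInt_of_continuous, psi_continuous.
- apply continuous_Rinv_comp; [apply psi_continuous | apply Rgt_not_eq, psi_pos].
Qed.

Lemma ex_RInt_Psi_div_psi u v : ex_RInt Psi_div_psi u v.
Proof. apply ex_RInt_of_continuous, Psi_div_psi_continuous. Qed.

Lemma is_derive_int_Psi_div_psi x : is_derive I x (Psi_div_psi x).
Proof. apply is_derive_RInt_of_continuous, Psi_div_psi_continuous. Qed.

Lemma Psi_div_psi_bounds s : 0 <= s -> e * s <= Psi_div_psi s <= s / e.
Proof.
intros Hs. unfold Psi_div_psi, Rdiv.
pose proof (Psi_ge s Hs). pose proof (Psi_le s Hs). pose proof (Psi_nonneg s Hs).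
pose proof (psi_pos s). pose proof (psi_ge s). pose proof (psi_le_1 s).
assert (1 <= / psi a b s) by (rewrite <- Rinv_1; apply Rinv_le_contravar; lra).
assert (/ psi a b s <= / e) by (apply Rinv_le_contravar; [apply exp_pos | lra]).
nra.
Qed.

Lemma int_Psi_div_psi_nonneg t : 0 <= t -> 0 <= I t.
Proof.
intros Ht. apply RInt_ge_0; auto using ex_RInt_Psi_div_psi.
intros s Hs. pose proof (Psi_div_psi_bounds s). pose proof (exp_pos (- a * b ^ 2)). nra.
Qed.

Lemma int_Psi_div_psi_le t u : 0 <= t <= u -> I t <= I u.
Proof.
intros Htu. unfold I, int_Psi_div_psi.
rewrite <- (RInt_Chasles (V := R_CompleteNormedModule) _ 0 t u)
  by apply ex_RInt_Psi_div_psi.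
assert (0 <= RInt Psi_div_psi t u).
{ apply RInt_ge_0; [lra | apply ex_RInt_Psi_div_psi |].
  intros s Hs. pose proof (Psi_div_psi_bounds s). pose proof (exp_pos (- a * b ^ 2)). nra. }
unfold plus; simpl; lra.
Qed.

Lemma int_Psi_div_psi_b_bounds : e * b ^ 2 / 2 <= I b <= / e * b ^ 2 / 2.
Proof.
split.
- rewrite <- (is_RInt_unique _ _ _ _ (is_RInt_linear e b)).
  apply RInt_le; [lra | eexists; apply is_RInt_linear | apply ex_RInt_Psi_div_psi |].
  intros s Hs. apply Psi_div_psi_bounds; lra.
- rewrite <- (is_RInt_unique _ _ _ _ (is_RInt_linear (/ e) b)).
  apply RInt_le; [lra | apply ex_RInt_Psi_div_psi | eexists; apply is_RInt_linear |].
  intros s Hs. rewrite Rmult_comm. apply Psi_div_psi_bounds; lra.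
Qed.

Lemma int_Psi_div_psi_b_pos : 0 < I b.
Proof.
pose proof int_Psi_div_psi_b_bounds. pose proof (exp_pos (- a * b ^ 2)).
assert (0 < e * b ^ 2) by (apply Rmult_lt_0_compat; [| apply pow_lt]; lra). lra.
Qed.

Lemma gfun_eq r : gfun a b r = 1 - / 2 * (I (Rmin r b) / I b).
Proof. reflexivity. Qed.

Lemma gfun_continuous x : continuous (gfun a b) x.
Proof.
apply (continuous_comp (fun r => Rmin r b) (fun m => 1 - / 2 * (I m / I b))).
- apply continuous_Rmin; [apply continuous_id | apply continuous_const].
- apply (@ex_derive_continuous R_AbsRing R_NormedModule).
  auto_derive. eexists; apply is_derive_int_Psi_div_psi.
Qed.

Lemma gfun_bounds r : 0 <= r -> / 2 <= gfun a b r <= 1.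
Proof.
intros Hr. rewrite gfun_eq.
assert (Hm : 0 <= Rmin r b <= b) by (split; [apply Rmin_glb | apply Rmin_r]; lra).
pose proof int_Psi_div_psi_b_pos as HIb.
pose proof (int_Psi_div_psi_nonneg _ (proj1 Hm)). pose proof (int_Psi_div_psi_le _ _ Hm).
assert (0 <= I (Rmin r b) / I b <= 1).
{ split; [apply Rdiv_le_0_compat | apply (Rdiv_le_1 _ _ HIb)]; lra. }
lra.
Qed.

Lemma gfun_inside r : 0 <= r <= b -> gfun a b r = 1 - / 2 * (I r / I b).
Proof. intros Hr. rewrite gfun_eq, Rmin_left by lra. reflexivity. Qed.

Lemma gfun_outside r : b < r -> gfun a b r = / 2.
Proof.
intros Hr. pose proof int_Psi_div_psi_b_pos.
rewrite gfun_eq, Rmin_right by lra. field. lra.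
Qed.

Definition dffun r := psi a b r * gfun a b r.

Lemma dffun_continuous x : continuous dffun x.
Proof.
apply (continuous_mult (psi a b) (gfun a b)); [apply psi_continuous | apply gfun_continuous].
Qed.

Lemma ex_RInt_dffun u v : ex_RInt dffun u v.
Proof. apply ex_RInt_of_continuous, dffun_continuous. Qed.

Lemma is_derive_ffun x : is_derive (ffun a b) x (dffun x).
Proof. apply is_derive_RInt_of_continuous, dffun_continuous. Qed.

Lemma dffun_bounds r : 0 <= r -> / 2 * psi a b r <= dffun r <= psi a b r.
Proof.
intros Hr. unfold dffun.
pose proof (psi_pos r). pose proof (gfun_bounds r Hr). nra.
Qed.

Lemma ffun_bounds r : 0 <= r -> / 2 * Psi a b r <= ffun a b r <= Psi a b r.
Proof.
intros Hr. split.
- change (scal (/ 2) (RInt (psi a b) 0 r) <= ffun a b r).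
  rewrite <- (RInt_scal (V := R_CompleteNormedModule)) by apply ex_RInt_psi.
  apply RInt_le; auto using ex_RInt_dffun.
  { apply (ex_RInt_scal (V := R_CompleteNormedModule)), ex_RInt_psi. }
  intros s Hs. apply dffun_bounds; lra.
- apply RInt_le; auto using ex_RInt_psi, ex_RInt_dffun.
  intros s Hs. apply dffun_bounds; lra.
Qed.

Lemma ffun_0 : ffun a b 0 = 0.
Proof. apply (RInt_point (V := R_CompleteNormedModule)). Qed.

Lemma dffun_0 : dffun 0 = 1.
Proof.
unfold dffun. rewrite psi_inside, gfun_inside by lra.
replace (I 0) with 0 by (symmetry; apply (RInt_point (V := R_CompleteNormedModule))).
replace (- a * 0 ^ 2) with 0 by ring. rewrite exp_0. field.
apply Rgt_not_eq, int_Psi_div_psi_b_pos.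
Qed.

(* The second derivative of [ffun] on [0, b] only; beyond [b], [dffun] is constant. *)
Definition d2ffun r := - (2 * a * r) * dffun r - / 2 * (Psi a b r / I b).

Lemma has_deriv_in_dffun_inside r :
  0 <= r <= b -> has_deriv_in (fun y => 0 <= y <= b) dffun r (d2ffun r).
Proof.
intros Hr. pose proof int_Psi_div_psi_b_pos.
set (phi y := exp (- a * y ^ 2) * (1 - / 2 * (I y / I b))).
assert (Hphi : is_derive phi r
          (- (2 * a * r) * phi r - / 2 * (exp (- a * r ^ 2) * Psi_div_psi r / I b))).
{ unfold phi. auto_derive; [eexists; apply is_derive_int_Psi_div_psi |].
  replace (Derive (fun y => I y) r) with (Psi_div_psi r)
    by (symmetry; apply is_derive_unique, is_derive_int_Psi_div_psi).
  simpl. field. lra. }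
apply has_deriv_in_ext with phi; [| exact Hr |].
{ intros y Hy. unfold dffun. rewrite psi_inside, gfun_inside by lra. reflexivity. }
replace (d2ffun r) with (- (2 * a * r) * phi r - / 2 * (exp (- a * r ^ 2) * Psi_div_psi r / I b)).
{ apply is_derive_has_deriv_in, Hphi. }
unfold d2ffun, Psi_div_psi, dffun, phi. rewrite psi_inside, gfun_inside by lra.
field. split; [lra | apply Rgt_not_eq, exp_pos].
Qed.

Lemma has_deriv_in_dffun_outside D r : b < r -> has_deriv_in D dffun r 0.
Proof.
intros Hr. apply is_derive_has_deriv_in, is_derive_ext_loc with (fun _ => e / 2).
- assert (Hd : 0 < r - b) by lra. exists (mkposreal _ Hd). intros y Hy.
  change (Rabs (y - r) < r - b) in Hy. apply Rabs_def2 in Hy.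
  unfold dffun. rewrite psi_outside, gfun_outside by lra. reflexivity.
- apply (is_derive_const (K := R_AbsRing) (V := R_NormedModule)).
Qed.

Lemma dffun_of_has_deriv_in fp :
  (forall r, 0 <= r -> has_deriv_in nonneg_dom (ffun a b) r (fp r)) ->
  forall r, 0 <= r -> fp r = dffun r.
Proof.
intros Hfp r Hr. apply (has_deriv_in_unique nonneg_dom (ffun a b) r);
  [apply limit_point_nonneg_dom, Hr | apply Hfp, Hr | apply is_derive_has_deriv_in, is_derive_ffun].
Qed.

Section DerivativeAgreeingWithDffun.

Variable fp : R -> R.
Hypothesis fp_eq : forall r, 0 <= r -> fp r = dffun r.

Lemma has_deriv_in_inside_of_eq_dffun r :
  0 <= r <= b -> has_deriv_in (fun y => 0 <= y <= b) fp r (d2ffun r).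
Proof.
intros Hr. apply has_deriv_in_ext with dffun; auto.
- intros y Hy. apply fp_eq; lra.
- apply has_deriv_in_dffun_inside, Hr.
Qed.

Lemma has_deriv_in_outside_of_eq_dffun r : b < r -> has_deriv_in nonneg_dom fp r 0.
Proof.
intros Hr. apply has_deriv_in_ext with dffun; [exact fp_eq | red; lra |].
apply has_deriv_in_dffun_outside, Hr.
Qed.

End DerivativeAgreeingWithDffun.

Lemma d2ffun_le_0 r : 0 <= r -> d2ffun r <= 0.
Proof.
intros Hr. unfold d2ffun.
pose proof (dffun_bounds r Hr). pose proof (psi_pos r). pose proof int_Psi_div_psi_b_pos.
assert (0 <= Psi a b r / I b) by (apply Rdiv_le_0_compat; [apply Psi_nonneg |]; lra).
assert (0 <= a * r * dffun r) by (apply Rmult_le_pos; [apply Rmult_le_pos |]; lra).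
lra.
Qed.

Lemma d2ffun_drift_le r : 0 <= r -> d2ffun r + a * r * dffun r <= - (e / b ^ 2) * ffun a b r.
Proof.
intros Hr. unfold d2ffun.
pose proof (dffun_bounds r Hr). pose proof (psi_pos r). pose proof (ffun_bounds r Hr).
pose proof int_Psi_div_psi_b_pos. pose proof int_Psi_div_psi_b_bounds.
pose proof (exp_pos (- a * b ^ 2)). assert (0 < b ^ 2) by (apply pow_lt; lra).
assert (Hk : e / b ^ 2 <= / 2 * / I b).
{ rewrite <- Rinv_mult. replace (e / b ^ 2) with (/ (/ e * b ^ 2)) by (field; lra).
  apply Rinv_le_contravar; lra. }
assert (e / b ^ 2 * ffun a b r <= / 2 * / I b * Psi a b r).
{ apply Rle_trans with (e / b ^ 2 * Psi a b r).
  - apply Rmult_le_compat_l; [apply Rdiv_le_0_compat |]; lra.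
  - apply Rmult_le_compat_r; [apply Psi_nonneg |]; lra. }
assert (0 <= a * r * dffun r) by (apply Rmult_le_pos; [apply Rmult_le_pos |]; lra).
unfold Rdiv in *. lra.
Qed.

Lemma ffun_shift_ge r h : 0 <= r -> 0 <= h -> ffun a b r + h * (e / 2) <= ffun a b (r + h).
Proof.
intros Hr Hh.
assert (Hsplit : ffun a b (r + h) = ffun a b r + RInt dffun r (r + h))
  by (symmetry; apply (RInt_Chasles (V := R_CompleteNormedModule)); apply ex_RInt_dffun).
rewrite Hsplit. replace h with (r + h - r) at 1 by ring.
apply Rplus_le_compat_l, RInt_ge_const; [lra | apply ex_RInt_dffun |].
intros s Hs. pose proof (dffun_bounds s). pose proof (psi_ge s). lra.
Qed.

Lemma ffun_dilation_le c r : 0 <= c <= 1 -> 0 <= r ->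
  ffun a b r <= exp (- (c * e / 4)) * ffun a b ((1 + c) * r).
Proof.
intros Hc Hr. set (x := c * e / 4).
assert (He : 0 < e <= 1) by (split; [apply exp_pos | rewrite <- exp_0; apply exp_le_exp; nra]).
assert (Hx : 0 <= x <= / 4) by (unfold x; split; nra).
assert (Hshift : ffun a b r + 2 * x * r <= ffun a b ((1 + c) * r)).
{ replace ((1 + c) * r) with (r + c * r) by ring.
  replace (2 * x * r) with (c * r * (e / 2)) by (unfold x; field).
  apply ffun_shift_ge; nra. }
pose proof (ffun_bounds r Hr). pose proof (Psi_le r Hr). pose proof (Psi_nonneg r Hr).
set (F := ffun a b r) in *. set (G := ffun a b ((1 + c) * r)) in *.
assert (HG : (1 - x) * G <= exp (- x) * G)
  by (apply Rmult_le_compat_r; [| pose proof (exp_ineq1_le (- x))]; nra).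
assert ((1 - x) * (F + 2 * x * r) <= (1 - x) * G) by (apply Rmult_le_compat_l; lra).
(* (1 - x) (F + 2 x r) - F = x (r - F) + x r (1 - 2 x) *)
assert (0 <= x * (r - F)) by (apply Rmult_le_pos; lra).
assert (0 <= x * r * (1 - 2 * x)) by (apply Rmult_le_pos; [apply Rmult_le_pos |]; lra).
lra.
Qed.

End Profile.

Theorem lemma2 (alpha Rf : R) (Halpha : 0 < alpha) (HRf : 0 < Rf) :
  let f := ffun alpha Rf in
  let ps := psi alpha Rf in
  let Ps := Psi alpha Rf in
  let e := exp (- alpha * Rf ^ 2) in
  (* f is differentiable on [0, +oo) (one-sided at 0) *)
  (forall r, 0 <= r -> exists l, has_deriv_in nonneg_dom f r l) /\
  (forall fp : R -> R,
     (forall r, 0 <= r -> has_deriv_in nonneg_dom f r (fp r)) ->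
     (* (F1) *)
     (f 0 = 0 /\ fp 0 = 1) /\
     (* (F2) *)
     (forall r, 0 <= r -> / 2 * e <= / 2 * ps r /\ / 2 * ps r <= fp r /\ fp r <= 1) /\
     (* (F3) *)
     (forall r, 0 <= r ->
        / 2 * e * r <= / 2 * Ps r /\ / 2 * Ps r <= f r /\ f r <= Ps r /\ Ps r <= r) /\
     (* f' is differentiable on [0, Rf] (one-sided at the endpoints) and on (Rf, +oo) *)
     (forall r, 0 <= r <= Rf -> exists l, has_deriv_in (fun y => 0 <= y <= Rf) fp r l) /\
     (forall r, Rf < r -> exists l, has_deriv_in nonneg_dom fp r l) /\
     (forall fpp : R -> R,
        (forall r, 0 <= r <= Rf -> has_deriv_in (fun y => 0 <= y <= Rf) fp r (fpp r)) ->
        (forall r, Rf < r -> has_deriv_in nonneg_dom fp r (fpp r)) ->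
        (* (F4) *)
        (forall r, 0 <= r <= Rf -> fpp r + alpha * r * fp r <= - (e / Rf ^ 2) * f r) /\
        (* (F5) *)
        (forall r, 0 <= r -> fpp r <= 0) /\
        (forall r, Rf < r -> fpp r = 0)) /\
     (* (F6) *)
     (ln 2 <= alpha * Rf ^ 2 ->
        forall c r, 0 < c < 1 -> 0 <= r ->
          f r <= exp (- (c * e / 4)) * f ((1 + c) * r))).
Proof.
cbv zeta. assert (Ha : 0 <= alpha) by lra. split.
{ intros r _. eexists. apply is_derive_has_deriv_in, is_derive_ffun. }
intros fp Hfp. pose proof (dffun_of_has_deriv_in alpha Rf fp Hfp) as Efp.
pose proof (has_deriv_in_inside_of_eq_dffun alpha Rf Ha HRf fp Efp) as Hfp_in.
pose proof (has_deriv_in_outside_of_eq_dffun alpha Rf Ha HRf fp Efp) as Hfp_out.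
split; [| split; [| split; [| split; [| split; [| split]]]]].
- rewrite Efp by lra. split; [apply ffun_0 | apply dffun_0; lra].
- intros r Hr. rewrite Efp by lra.
  pose proof (psi_ge alpha Rf Ha r). pose proof (psi_le_1 alpha Rf Ha r).
  pose proof (dffun_bounds alpha Rf Ha HRf r Hr). lra.
- intros r Hr. pose proof (Psi_ge alpha Rf Ha r Hr). pose proof (Psi_le alpha Rf Ha r Hr).
  pose proof (ffun_bounds alpha Rf Ha HRf r Hr). lra.
- intros r Hr. eexists. apply Hfp_in, Hr.
- intros r Hr. eexists. apply Hfp_out, Hr.
- intros fpp Hfpp_in Hfpp_out.
  assert (Efpp_in : forall r, 0 <= r <= Rf -> fpp r = d2ffun alpha Rf r).
  { intros r Hr. apply (has_deriv_in_unique (fun y => 0 <= y <= Rf) fp r);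
      [apply limit_point_segment | apply Hfpp_in | apply Hfp_in]; lra. }
  assert (Efpp_out : forall r, Rf < r -> fpp r = 0).
  { intros r Hr. apply (has_deriv_in_unique nonneg_dom fp r);
      [apply limit_point_nonneg_dom | apply Hfpp_out | apply Hfp_out]; lra. }
  split; [| split; [| exact Efpp_out]].
  + intros r Hr. rewrite Efpp_in, Efp by lra. apply d2ffun_drift_le; lra.
  + intros r Hr. destruct (Rle_or_lt r Rf).
    * rewrite Efpp_in by lra. apply d2ffun_le_0; lra.
    * rewrite Efpp_out; lra.
- intros _ c r Hc Hr. apply ffun_dilation_le; lra.
Qed.
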